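(* Let $(\mathfrak g,\mathfrak g';\rho,\rho')$ be a matched pair of Hom-Lie algebras. Then the Hom-Lie algebra $(\mathfrak g\oplus\mathfrak g',[\cdot,\cdot]_d,\phi_d)$ is weakly involutive if and only if: (i) $\mathfrak g$ is weakly involutive and $(\mathfrak g',\phi_{\mathfrak g'},\rho)$ is a weakly involutive representation of $\mathfrak g$; (ii) $\mathfrak g'$ is weakly involutive and $(\mathfrak g,\phi_{\mathfrak g},\rho')$ is a weakly involutive representation of $\mathfrak g'$; (iii) $\rho(x)\phi_{\mathfrak g'}^2=\rho(x)$ for all $x\in\mathfrak g$; (iv) $\rho'(x')\phi_{\mathfrak g}^2=\rho'(x')$ for all $x'\in\mathfrak g'$.
   Context: A Hom-Lie algebra $(\mathfrak{h},[\cdot,\cdot]_{\mathfrak{h}},\phi_{\mathfrak{h}})$: skew-symmetric bilinear bracket and linear map with $\phi_{\mathfrak h}[x,y]=[\phi_{\mathfrak h}x,\phi_{\mathfrak h}y]$ and $[\phi_{\mathfrak h}(x),[y,z]]+[\phi_{\mathfrak h}(y),[z,x]]+[\phi_{\mathfrak h}(z),[x,y]]=0$; weakly involutive if $[\phi_{\mathfrak h}^2(x),y]=[x,y]$. A representation $(V,\beta,\rho)$ of $\mathfrak h$: $\beta\in\mathfrak{gl}(V)$, $\rho:\mathfrak h\to\mathfrak{gl}(V)$ with $\rho(\phi_{\mathfrak h}(x))\beta=\beta\rho(x)$ and $\rho([x,y])\beta=\rho(\phi_{\mathfrak h}(x))\rho(y)-\rho(\phi_{\mathfrak h}(y))\rho(x)$;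 weakly involutive if $\rho(\phi_{\mathfrak h}^2(x))=\rho(x)$. A matched pair $(\mathfrak g,\mathfrak g';\rho,\rho')$: Hom-Lie algebras $(\mathfrak g,[\cdot,\cdot]_{\mathfrak g},\phi_{\mathfrak g})$, $(\mathfrak g',[\cdot,\cdot]_{\mathfrak g'},\phi_{\mathfrak g'})$, representations $(\mathfrak g',\phi_{\mathfrak g'},\rho)$ of $\mathfrak g$ and $(\mathfrak g,\phi_{\mathfrak g},\rho')$ of $\mathfrak g'$ with, for $x,y\in\mathfrak g$, $x',y'\in\mathfrak g'$: $\rho'(\phi_{\mathfrak g'}(x'))[x,y]_{\mathfrak g}=[\rho'(x')x,\phi_{\mathfrak g}(y)]_{\mathfrak g}+[\phi_{\mathfrak g}(x),\rho'(x')y]_{\mathfrak g}+\rho'(\rho(y)x')\phi_{\mathfrak g}(x)-\rho'(\rho(x)x')\phi_{\mathfrak g}(y)$ and $\rho(\phi_{\mathfrak g}(x))[x',y']_{\mathfrak g'}=[\rho(x)x',\phi_{\mathfrak g'}(y')]_{\mathfrak g'}+[\phi_{\mathfrak g'}(x'),\rho(x)y']_{\mathfrak g'}+\rho(\rho'(y')x)\phi_{\mathfrak g'}(x')-\rho(\rho'(x')x)\phi_{\mathfrak g'}(y')$. For such a matched pair, $(\mathfrak g\oplus\mathfrak g',[\cdot,\cdot]_d,\phi_d)$ is the Hom-Lie algebra with $\phi_d(x,x')=(\phi_{\mathfrak g}(x),\phi_{\mathfrak g'}(x'))$ and $[(x,x'),(y,y')]_d=([x,y]_{\mathfrak g}-\rho'(y')x+\rho'(x')y,\,[x',y']_{\mathfrak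 g'}+\rho(x)y'-\rho(y)x')$. *)

From mathcomp Require Import all_boot all_algebra.
Set Implicit Arguments. Unset Strict Implicit. Unset Printing Implicit Defensive.
Import GRing.Theory.
Local Open Scope ring_scope.

Definition is_lin (K : fieldType) (U V : lmodType K) (f : U -> V) : Prop :=
  forall (a : K) (x y : U), f (a *: x + y) = a *: f x + f y.

Definition HomLie (K : fieldType) (h : lmodType K)
    (br : h -> h -> h) (phi : h -> h) : Prop :=
  is_lin phi /\
  (forall y, is_lin (fun x => br x y)) /\
  (forall x, is_lin (br x)) /\
  (forall x y, br x y = - br y x) /\
  (forall x y, phi (br x y) = br (phi x) (phi y)) /\
  (forall x y z, br (phi x) (br y z) + br (phi y) (br z x)
                 + br (phi z) (br x y) = 0).

Definition weakly_involutive (h : Type) (br : h -> h -> h) (phi : h -> h) : Prop :=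
  forall x y, br (phi (phi x)) y = br x y.

Definition HomLieRep (K : fieldType) (h : lmodType K)
    (br : h -> h -> h) (phi : h -> h)
    (V : lmodType K) (beta : V -> V) (rho : h -> V -> V) : Prop :=
  [/\ is_lin beta,
      (forall x, is_lin (rho x)),
      (forall v, is_lin (fun x => rho x v)),
      (forall x v, rho (phi x) (beta v) = beta (rho x v)) &
      (forall x y v, rho (br x y) (beta v)
                     = rho (phi x) (rho y v) - rho (phi y) (rho x v))].

Definition weakly_involutive_rep (h V : Type) (phi : h -> h)
    (rho : h -> V -> V) : Prop :=
  forall x v, rho (phi (phi x)) v = rho x v.

Definition matched_pair (K : fieldType) (g g' : lmodType K)
    (brg : g -> g -> g) (phig : g -> g)
    (brg' : g' -> g' -> g') (phig' : g' -> g')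
    (rho : g -> g' -> g') (rho' : g' -> g -> g) : Prop :=
  HomLie brg phig /\ HomLie brg' phig' /\
  HomLieRep brg phig phig' rho /\
  HomLieRep brg' phig' phig rho' /\
      (forall (x y : g) (x' : g'),
          rho' (phig' x') (brg x y)
          = brg (rho' x' x) (phig y) + brg (phig x) (rho' x' y)
            + rho' (rho y x') (phig x) - rho' (rho x x') (phig y)) /\
      (forall (x : g) (x' y' : g'),
          rho (phig x) (brg' x' y')
          = brg' (rho x x') (phig' y') + brg' (phig' x') (rho x y')
            + rho (rho' y' x) (phig' x') - rho (rho' x' x) (phig' y')).

Definition phi_d (K : fieldType) (g g' : lmodType K)
    (phig : g -> g) (phig' : g' -> g') (u : g * g') : g * g' :=
  (phig u.1, phig' u.2).

Definition bracket_d (K : fieldType) (g g' : lmodType K)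
    (brg : g -> g -> g) (brg' : g' -> g' -> g')
    (rho : g -> g' -> g') (rho' : g' -> g -> g) (u v : g * g') : g * g' :=
  (brg u.1 v.1 - rho' v.2 u.1 + rho' u.2 v.1,
   brg' u.2 v.2 + rho u.1 v.2 - rho v.1 u.2).

(* Evaluated at u, v of the form (x, 0) or (0, x'), the identity
   [phi_d^2 u, v]_d = [u, v]_d isolates each of the four conditions, because
   all structure maps vanish at 0; conversely, the four conditions rewrite the
   components of [phi_d^2 u, v]_d into those of [u, v]_d term by term. *)
From mathcomp Require Import all_boot all_algebra.
Local Open Scope ring_scope.
Import GRing.Theory.

Lemma is_lin0 {K : fieldType} {U V : lmodType K} {f : U -> V} :
  is_lin f -> f 0 = 0.
Proof.
move=> f_lin; have := f_lin 1 0 0; rewrite !scale1r addr0 => f0.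
by apply: (addrI (f 0)); rewrite addr0 -f0.
Qed.

Section DirectSumWeaklyInvolutive.

Set Implicit Arguments.
Unset Strict Implicit.

Variables (K : fieldType) (g g' : lmodType K).
Variables (brg : g -> g -> g) (phig : g -> g).
Variables (brg' : g' -> g' -> g') (phig' : g' -> g').
Variables (rho : g -> g' -> g') (rho' : g' -> g -> g).

Local Notation brd := (bracket_d brg brg' rho rho').
Local Notation phid := (phi_d phig phig').

Lemma weakly_involutive_d_of_components :
  [/\ weakly_involutive brg phig /\ weakly_involutive_rep phig rho,
      weakly_involutive brg' phig' /\ weakly_involutive_rep phig' rho',
      (forall (x : g) (y' : g'), rho x (phig' (phig' y')) = rho x y') &
      (forall (x' : g') (y : g), rho' x' (phig (phig y)) = rho' x' y)] ->
  weakly_involutive brd phid.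
Proof.
move=> [[wi_g wi_rho] [wi_g' wi_rho'] rho_phig'2 rho'_phig2] [x x'] [y y'].
by rewrite /bracket_d /phi_d /= wi_g wi_rho wi_g' wi_rho' rho_phig'2 rho'_phig2.
Qed.

Hypotheses (phig0 : phig 0 = 0) (phig'0 : phig' 0 = 0).
Hypotheses (brg0l : forall y, brg 0 y = 0) (brg0r : forall x, brg x 0 = 0).
Hypotheses (brg'0l : forall y', brg' 0 y' = 0) (brg'0r : forall x', brg' x' 0 = 0).
Hypotheses (rho0l : forall v, rho 0 v = 0) (rho0r : forall x, rho x 0 = 0).
Hypotheses (rho'0l : forall v, rho' 0 v = 0) (rho'0r : forall x', rho' x' 0 = 0).

Lemma phi_d2_l (x : g) : phid (phid (x, 0)) = (phig (phig x), 0).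
Proof. by rewrite /phi_d /= !phig'0. Qed.

Lemma phi_d2_r (x' : g') : phid (phid (0, x')) = (0, phig' (phig' x')).
Proof. by rewrite /phi_d /= !phig0. Qed.

Lemma bracket_d_ll (x y : g) : brd (x, 0) (y, 0) = (brg x y, 0).
Proof. by rewrite /bracket_d /= !rho'0l !rho0r brg'0l !subr0 !addr0. Qed.

Lemma bracket_d_lr (x : g) (y' : g') : brd (x, 0) (0, y') = (- rho' y' x, rho x y').
Proof. by rewrite /bracket_d /= brg0r rho'0l brg'0l rho0l addr0 sub0r subr0 add0r. Qed.

Lemma bracket_d_rl (x' : g') (y : g) : brd (0, x') (y, 0) = (rho' x' y, - rho y x').
Proof. by rewrite /bracket_d /= brg0l rho'0r rho0l brg'0r subr0 !add0r. Qed.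

Lemma bracket_d_rr (x' y' : g') : brd (0, x') (0, y') = (0, brg' x' y').
Proof. by rewrite /bracket_d /= brg0l !rho'0r !rho0l !subr0 !addr0. Qed.

Lemma components_of_weakly_involutive_d :
  weakly_involutive brd phid ->
  [/\ weakly_involutive brg phig /\ weakly_involutive_rep phig rho,
      weakly_involutive brg' phig' /\ weakly_involutive_rep phig' rho',
      (forall (x : g) (y' : g'), rho x (phig' (phig' y')) = rho x y') &
      (forall (x' : g') (y : g), rho' x' (phig (phig y)) = rho' x' y)].
Proof.
move=> wi_d; split; [split|split| |] => a b.
- by have := wi_d (a, 0) (b, 0); rewrite phi_d2_l !bracket_d_ll => -[].
- by have := wi_d (a, 0) (0, b); rewrite phi_d2_l !bracket_d_lr => -[].
- by have := wi_d (0, a) (0, b); rewrite phi_d2_r !bracket_d_rr => -[].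
- by have := wi_d (0, a) (b, 0); rewrite phi_d2_r !bracket_d_rl => -[].
- by have := wi_d (0, b) (a, 0); rewrite phi_d2_r !bracket_d_rl => -[_ /oppr_inj].
- by have := wi_d (b, 0) (0, a); rewrite phi_d2_l !bracket_d_lr => -[/oppr_inj].
Qed.

Lemma weakly_involutive_dP :
  weakly_involutive brd phid <->
  [/\ weakly_involutive brg phig /\ weakly_involutive_rep phig rho,
      weakly_involutive brg' phig' /\ weakly_involutive_rep phig' rho',
      (forall (x : g) (y' : g'), rho x (phig' (phig' y')) = rho x y') &
      (forall (x' : g') (y : g), rho' x' (phig (phig y)) = rho' x' y)].
Proof.
split; [exact: components_of_weakly_involutive_d
       | exact: weakly_involutive_d_of_components].
Qed.

End DirectSumWeaklyInvolutive.

Theorem proposition3p3 (K : fieldType) (g g' : lmodType K)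
    (brg : g -> g -> g) (phig : g -> g)
    (brg' : g' -> g' -> g') (phig' : g' -> g')
    (rho : g -> g' -> g') (rho' : g' -> g -> g) :
  matched_pair brg phig brg' phig' rho rho' ->
  (weakly_involutive (bracket_d brg brg' rho rho') (phi_d phig phig')
   <->
   [/\ weakly_involutive brg phig /\ weakly_involutive_rep phig rho,
       weakly_involutive brg' phig' /\ weakly_involutive_rep phig' rho',
       (forall (x : g) (y' : g'), rho x (phig' (phig' y')) = rho x y') &
       (forall (x' : g') (y : g), rho' x' (phig (phig y)) = rho' x' y)]).
Proof.
move=> [[phig_lin [brg_linl [brg_linr _]]] [[phig'_lin [brg'_linl [brg'_linr _]]]
        [[_ rho_linr rho_linl _ _] [[_ rho'_linr rho'_linl _ _] _]]]].
exact: (weakly_involutive_dP (is_lin0 phig_lin) (is_lin0 phig'_lin)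
  (fun y => is_lin0 (brg_linl y)) (fun x => is_lin0 (brg_linr x))
  (fun y' => is_lin0 (brg'_linl y')) (fun x' => is_lin0 (brg'_linr x'))
  (fun v => is_lin0 (rho_linl v)) (fun x => is_lin0 (rho_linr x))
  (fun v => is_lin0 (rho'_linl v)) (fun x' => is_lin0 (rho'_linr x'))).
Qed.
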